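(* Let $\mathbb{N}$ be a strongly connected directed graph on vertices $\{1,\dots,m\}$, let $\mathcal{J}=\{ij: i\in\{1,\dots,m\},\ j\in\bar{\mathcal{N}}_i\}$ be its set of arcs ($ij$ denoting the arc from $j$ to $i$, $\bar{\mathcal{N}}_i$ the set of $j\neq i$ with such an arc), let $b_i$ be the $i$-th unit vector of $\mathbb{R}^m$, and let $c_{ij}\in\mathbb{R}^{1\times m}$ have entry $-1$ in position $i$, $+1$ in position $j$, and zeros elsewhere. Consider the $|\mathcal{J}|$-channel system $$\dot z=\sum_{ij\in\mathcal{J}}b_iv_{ij},\qquad w_{ij}=c_{ij}z,\quad ij\in\mathcal{J},$$ with state $z\in\mathbb{R}^m$, in which channel $ij$ has input matrix $b_i$ and output matrix $c_{ij}$. Then every complementary subsystem of this system is complete.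
   Context: For a nonempty proper subset $\mathcal{C}\subset\mathcal{J}$ with complement $\bar{\mathcal{C}}=\mathcal{J}\setminus\mathcal{C}$, the complementary subsystem determined by $\mathcal{C}$ is the triple $(\mathbf{C},0_{m\times m},\mathbf{B})$ with $\mathbf{B}$ the block row of the $b_i$, $ij\in\mathcal{C}$, and $\mathbf{C}$ the block column of the $c_{ij}$, $ij\in\bar{\mathcal{C}}$. It is complete if its transfer matrix $\mathbf{C}(sI)^{-1}\mathbf{B}$ is nonzero and the pencil $\begin{bmatrix}\lambda I&\mathbf{B}\\ \mathbf{C}&0\end{bmatrix}$ has rank at least $m$ for every complex $\lambda$. *)

From HB Require Import structures.
From mathcomp Require Import all_boot all_order all_algebra all_field.
Set Implicit Arguments. Unset Strict Implicit. Unset Printing Implicit Defensive.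
Import Order.TTheory GRing.Theory Num.Theory.
Local Open Scope ring_scope.

(* Vertices are 'I_m (standing for {1,...,m}).  The graph is given by a
   relation [arc : rel 'I_m], where [arc j i] means there is an arc from j to i. *)

Definition strongly_connected (m : nat) (arc : rel 'I_m) : Prop :=
  forall x y : 'I_m, connect arc x y.

(* The arc set J = { ij : j in Nbar_i }, where ij = (i, j) denotes the arc
   from j to i, with j <> i. *)
Definition arcset (m : nat) (arc : rel 'I_m) : {set 'I_m * 'I_m} :=
  [set p : 'I_m * 'I_m | (p.2 != p.1) && arc p.2 p.1].

Definition bvec (m : nat) (i : 'I_m) : 'cV[algC]_m :=
  \col_(r < m) (r == i)%:R.

Definition cvec (m : nat) (i j : 'I_m) : 'rV[algC]_m :=
  \row_(c < m) ((c == j)%:R - (c == i)%:R).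

Definition Bmat (m : nat) (C : {set 'I_m * 'I_m}) : 'M[algC]_(m, #|C|) :=
  \matrix_(r < m, k < #|C|) bvec (enum_val k).1 r 0.

Definition Cmat (m : nat) (D : {set 'I_m * 'I_m}) : 'M[algC]_(#|D|, m) :=
  \matrix_(k < #|D|, c < m) cvec (enum_val k).1 (enum_val k).2 0 c.

(* Transfer matrix C (sI)^{-1} B of the triple (C, 0, B), evaluated at s. *)
Definition transfer (m : nat) (J C : {set 'I_m * 'I_m}) (s : algC)
  : 'M[algC]_(#|J :\: C|, #|C|) :=
  Cmat (J :\: C) *m invmx (s%:M : 'M[algC]_m) *m Bmat C.

Definition pencil (m : nat) (J C : {set 'I_m * 'I_m}) (lam : algC)
  : 'M[algC]_(m + #|J :\: C|, m + #|C|) :=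
  block_mx (lam%:M) (Bmat C) (Cmat (J :\: C)) 0.

(* Completeness of the complementary subsystem determined by C (within J):
   the transfer matrix (a rational matrix function of s) is not identically
   zero, and the pencil has rank >= m for every complex lambda. *)
Definition complete_subsystem (m : nat) (J C : {set 'I_m * 'I_m}) : Prop :=
  (exists s : algC, s != 0 /\ transfer J C s != 0) /\
  (forall lam : algC, (m <= \rank (pencil J C lam))%N).

From HB Require Import structures.
From mathcomp Require Import all_boot all_order all_algebra all_field.
Set Implicit Arguments. Unset Strict Implicit. Unset Printing Implicit Defensive.
Import GRing.Theory.
Local Open Scope ring_scope.

(* Call i the head of the arc ij.  At s = 1 the transfer matrix is
   Cmat (J :\: C) *m Bmat C, whose entry c_p b_q is +-1 whenever the head of
   q in C is an endpoint of p outside C.  Such a pair exists: otherwise the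
   heads of C would form a set closed under arcs, hence by strong connectivity
   contain every vertex, including the head of an arc outside C.
   For lambda <> 0 the rows [lambda I, Bmat C] already have rank m.  For
   lambda = 0 the pencil has rank rank Bmat + rank Cmat >= rank [Bmat, Cmat^T],
   and a row vector v with v [Bmat, Cmat^T] = 0 vanishes at the heads of C and
   takes equal values at both ends of each arc outside C; its zero set is then
   closed under arcs, so v = 0. *)

Section RankLemmas.

Variable F : fieldType.

Lemma mxrank_row_mx_leq m n1 n2 (A : 'M[F]_(m, n1)) (B : 'M[F]_(m, n2)) :
  (\rank (row_mx A B) <= \rank A + \rank B)%N.
Proof.
rewrite -mxrank_tr tr_row_mx -(mxrank_tr A) -(mxrank_tr B) -addsmxE.
exact: (mxrank_adds_leqif _ _).1.
Qed.

Lemma mxrank_antidiag_block_mx m1 m2 n1 n2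
    (A : 'M[F]_(m1, n2)) (B : 'M[F]_(m2, n1)) :
  \rank (block_mx 0 A B 0) = (\rank A + \rank B)%N.
Proof.
rewrite block_mxEv -addsmxE addsmxC addsmxE -block_mxEv.
by rewrite rank_diag_block_mx addnC.
Qed.

Lemma mxrank_scalar_block_mx n p q (a : F) (B : 'M[F]_(n, q))
    (C : 'M[F]_(p, n)) (D : 'M[F]_(p, q)) :
  a != 0 -> (n <= \rank (block_mx a%:M B C D))%N.
Proof.
move=> a_neq0; rewrite block_mxEv.
have row_free_aB : row_free (row_mx a%:M B).
  apply: inj_row_free => v; rewrite mul_mx_row -row_mx0 => /eq_row_mx[+ _].
  by rewrite mul_mx_scalar => /eqP; rewrite scaler_eq0 (negbTE a_neq0) => /eqP.
rewrite -row_leq_rank in row_free_aB; apply: leq_trans row_free_aB _.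
by rewrite mxrankS // -addsmxE addsmxSl.
Qed.

End RankLemmas.

Section IncidenceMatrices.

Variable m : nat.

Lemma mulmx_BmatE n (M : 'M[algC]_(n, m)) (C : {set 'I_m * 'I_m}) r k :
  (M *m Bmat C) r k = M r (enum_val k).1.
Proof.
have -> : (M *m Bmat C) r k = (M *m delta_mx (enum_val k).1 (0 : 'I_1)) r 0.
  by rewrite !mxE; apply: eq_bigr => c _; rewrite !mxE andbT.
by rewrite -colE mxE.
Qed.

Lemma Cmat_mulmxE n (M : 'M[algC]_(m, n)) (D : {set 'I_m * 'I_m}) k c :
  (Cmat D *m M) k c = M (enum_val k).2 c - M (enum_val k).1 c.
Proof.
have row_Cmat : row k (Cmat D) = 'e_(enum_val k).2 - 'e_(enum_val k).1.
  by apply/rowP => c'; rewrite !mxE !eqxx.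
have -> : (Cmat D *m M) k c = row k (Cmat D *m M) (0 : 'I_1) c by rewrite [RHS]mxE.
by rewrite row_mul row_Cmat mulmxBl -!rowE !mxE.
Qed.

Lemma Cmat_mul_Bmat_neq0 (D C : {set 'I_m * 'I_m}) p q :
  p \in D -> q \in C -> p.1 != p.2 -> (q.1 == p.1) || (q.1 == p.2) ->
  Cmat D *m Bmat C != 0.
Proof.
move=> pD qC p12 /orP q1p; apply/eqP => /matrixP.
move=> /(_ (enum_rank_in pD p) (enum_rank_in qC q)).
rewrite mulmx_BmatE !mxE !enum_rankK_in //.
case: q1p => /eqP ->; rewrite eqxx.
  by rewrite (negbTE p12) sub0r => /eqP; rewrite oppr_eq0 oner_eq0.
by rewrite eq_sym (negbTE p12) subr0 => /eqP; rewrite oner_eq0.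
Qed.

End IncidenceMatrices.

Section StronglyConnected.

Variables (m : nat) (arc : rel 'I_m).
Hypothesis arc_sc : strongly_connected arc.
Local Notation J := (arcset arc).

Lemma arcset_arc a b : arc a b -> a != b -> (b, a) \in J.
Proof. by move=> ab a_neq_b; rewrite inE /= a_neq_b ab. Qed.

Lemma forward_closedT (P : pred 'I_m) x :
  (forall a b, arc a b -> a != b -> P a -> P b) -> P x -> forall y, P y.
Proof.
move=> closedP Px y; have /connectP[s] := arc_sc x y.
elim: s x Px => [|z s IHs] x Px /=; first by move=> _ ->.
case/andP=> xz zs y_last; apply: (IHs z) zs y_last.
by have [<- // | x_neq_z] := eqVneq x z; apply: closedP xz x_neq_z Px.
Qed.

Lemma const_from_heads (T : eqType) (t : T) (f : 'I_m -> T) C :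
  C != set0 -> {in C, forall q, f q.1 = t} ->
  {in J :\: C, forall p, f p.1 = f p.2} -> forall y, f y = t.
Proof.
case/set0Pn=> q0 q0C f_heads f_const y; apply/eqP.
apply: (@forward_closedT (fun y => f y == t) q0.1); last by rewrite f_heads.
move=> a b ab a_neq_b /eqP fa; have baJ := arcset_arc ab a_neq_b.
have [baC | baNC] := boolP ((b, a) \in C); first by rewrite (f_heads _ baC).
by rewrite (f_const (b, a)) ?fa // inE baNC baJ.
Qed.

Lemma exists_arc_at_head C :
  C != set0 -> J :\: C != set0 ->
  [exists p in J :\: C, exists q in C, (q.1 == p.1) || (q.1 == p.2)].
Proof.
move=> C0 /set0Pn[p0 p0JC]; apply: contraT => /exists_inPn none.
pose head y := [exists q in C, q.1 == y].
have not_head p : p \in J :\: C -> (head p.1 = false) * (head p.2 = false).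
  move=> pJC; have /exists_inPn touch := none p pJC.
  by split; apply/exists_inP => -[q qC /eqP q1]; move: (touch q qC);
    rewrite q1 eqxx ?orbT.
have all_heads := @const_from_heads _ true head C C0.
rewrite -(not_head p0 p0JC).1 all_heads //.
  by move=> q qC; apply/exists_inP; exists q.
by move=> p pJC; rewrite !not_head.
Qed.

Lemma row_free_Bmat_trCmat C :
  C != set0 -> row_free (row_mx (Bmat C) (Cmat (J :\: C))^T).
Proof.
move=> C0; apply: inj_row_free => v; rewrite mul_mx_row -row_mx0.
case/eq_row_mx=> vB vC; apply/rowP => x; rewrite mxE.
apply: (@const_from_heads _ 0 (v 0) C C0) => [q qC | p pJC].
  have /matrixP/(_ 0 (enum_rank_in qC q)) := vB.
  by rewrite mulmx_BmatE enum_rankK_in // mxE.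
have /matrixP/(_ (enum_rank_in pJC p) 0) := congr1 trmx vC.
rewrite trmx_mul trmxK Cmat_mulmxE !mxE enum_rankK_in //.
by move/eqP; rewrite subr_eq0 eq_sym => /eqP.
Qed.

Lemma pencil0_rank C : C != set0 -> (m <= \rank (pencil J C 0%R))%N.
Proof.
move=> C0; rewrite /pencil.
have -> : (0%:M : 'M[algC]_m) = 0 by rewrite -scalemx1 scale0r.
rewrite mxrank_antidiag_block_mx -(mxrank_tr (Cmat _)).
apply: leq_trans (mxrank_row_mx_leq _ _).
by rewrite row_leq_rank row_free_Bmat_trCmat.
Qed.

End StronglyConnected.

Theorem lemma2 (m : nat) (arc : rel 'I_m) :
  strongly_connected arc ->
  forall C : {set 'I_m * 'I_m},
    C \subset arcset arc -> C != set0 -> C != arcset arc ->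
    complete_subsystem (arcset arc) C.
Proof.
move=> arc_sc C CJ C0 C_neqJ.
have JC0 : arcset arc :\: C != set0.
  by apply: contra C_neqJ; rewrite setD_eq0 eqEsubset CJ => ->.
split.
  exists 1; split; first exact: oner_neq0.
  rewrite /transfer invmx1 mulmx1.
  have /exists_inP[p pJC /exists_inP[q qC q1p]] :=
    exists_arc_at_head arc_sc C0 JC0.
  have p12 : p.1 != p.2 by move: pJC; rewrite !inE eq_sym => /andP[_ /andP[]].
  exact: Cmat_mul_Bmat_neq0 pJC qC p12 q1p.
move=> lam; have [-> | lam_neq0] := eqVneq lam 0; first exact: pencil0_rank.
exact: mxrank_scalar_block_mx.
Qed.
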